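(* Let $n\ge2$ be an integer and $a>1$. Define $$F_n(t)=\sum_{j>E_{n-1}}\frac{\exp\big(i t\, j^2\,\mathrm{Log}_1 j\cdots\mathrm{Log}_{n-1}j\cdot(\mathrm{Log}_n j)^a\big)}{j\,\mathrm{Log}_1 j\cdots\mathrm{Log}_{n-1}j\cdot(\mathrm{Log}_n j)^a},\qquad t\in\mathbb{R},$$ the sum running over integers $j>E_{n-1}$. Then $F_n$, $\operatorname{Re}F_n$ and $\operatorname{Im}F_n$ are continuous on $\mathbb{R}$ but differentiable at no point of $\mathbb{R}$. (For $n=2$ this is $F_2(t)=\sum_{j\ge3}\exp(it j^2\log j(\log\log j)^a)/(j\log j(\log\log j)^a)$.)
   Context: $\mathrm{Log}_1=\log$ and $\mathrm{Log}_k=\log\circ\mathrm{Log}_{k-1}$ is the $k$-fold iterated natural logarithm. $E_0=1$ and $E_k=\exp(E_{k-1})$, so $E_1=e$, $E_2=e^e$, etc.; $\mathrm{Log}_k t$ is defined and positive for $t>E_{k-1}$. *)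

From Stdlib Require Import Reals.
Open Scope R_scope.

Fixpoint Logk (k : nat) (t : R) : R :=
  match k with O => t | S k' => ln (Logk k' t) end.

Fixpoint Ek (k : nat) : R :=
  match k with O => 1 | S k' => exp (Ek k') end.

Fixpoint prodLog (m : nat) (t : R) : R :=
  match m with O => 1 | S m' => prodLog m' t * Logk (S m') t end.

Definition weight (n : nat) (a j : R) : R :=
  j * prodLog (n - 1) j * Rpower (Logk n j) a.

Definition phase (n : nat) (a j : R) : R :=
  j ^ 2 * prodLog (n - 1) j * Rpower (Logk n j) a.

Definition termRe (n : nat) (a t : R) (j : nat) : R :=
  if Rlt_dec (Ek (n - 1)) (INR j)
  then cos (t * phase n a (INR j)) / weight n a (INR j) else 0.

Definition termIm (n : nat) (a t : R) (j : nat) : R :=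
  if Rlt_dec (Ek (n - 1)) (INR j)
  then sin (t * phase n a (INR j)) / weight n a (INR j) else 0.

Definition partRe (n : nat) (a t : R) (N : nat) : R := sum_f_R0 (termRe n a t) N.
Definition partIm (n : nat) (a t : R) (N : nat) : R := sum_f_R0 (termIm n a t) N.

(* Write [w(x) = x Log_1 x ... Log_(n-1) x (Log_n x)^a], [c_j = 1 / w(j)] and [lam_j = j w(j)];
   then Re F_n and Im F_n are [sum_j c_j cos (lam_j t - b)] with [b = 0] and [b = pi/2].
   Comparing [c_j] with the telescoping differences of [(Log_n j)^(1-a)] shows [sum_j c_j < oo],
   so the series converge uniformly to continuous functions.

   For non-differentiability at [t0], test the sum against the grid
   [G f = sum_(p,q<M) f (t0 + (p-q) d) cos (lam_k (t0 + (p-q) d) - b)] with [lam_k d = 2 pi r / M].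
   Since the Dirichlet sums [sum_(p<M) cos (a + 2 pi p r / M)] vanish, [G] kills affine functions,
   so differentiability at [t0] forces [G F = o(M^3 d)]. Termwise, the [k]-th term contributes
   [c_k M^2 / 2], and Fejer-kernel bounds give at most [M^2 c_j / (C (j-k))^2] for the others
   because the frequencies are separated: [|lam_j - lam_k| >= |j - k| lam_k / k]. As [w] is
   monotone, doubling and at most quadratic, [sum_(j<>k) c_j / (j-k)^2 = O(c_k)]; together with
   [c_k lam_k = k] and [r ~ C k] this makes the [k]-th term too large. *)

From Stdlib Require Import Reals Lra Lia Psatz ZArith.
Open Scope R_scope.

Fixpoint sum_lt (M : nat) (f : nat -> R) : R :=
  match M with O => 0 | S m => sum_lt m f + f m end.

Lemma sum_lt_ext M f g :
  (forall i, (i < M)%nat -> f i = g i) -> sum_lt M f = sum_lt M g.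
Proof.
  induction M as [|M IH]; intros H; simpl; [reflexivity|].
  rewrite IH, (H M) by (try intros; try apply H; lia); reflexivity.
Qed.

Lemma sum_lt_add M f g : sum_lt M (fun i => f i + g i) = sum_lt M f + sum_lt M g.
Proof. induction M as [|M IH]; simpl; [lra | rewrite IH; ring]. Qed.

Lemma sum_lt_sub M f g : sum_lt M (fun i => f i - g i) = sum_lt M f - sum_lt M g.
Proof. induction M as [|M IH]; simpl; [lra | rewrite IH; ring]. Qed.

Lemma sum_lt_scal_l M c f : sum_lt M (fun i => c * f i) = c * sum_lt M f.
Proof. induction M as [|M IH]; simpl; [ring | rewrite IH; ring]. Qed.

Lemma sum_lt_scal_r M c f : sum_lt M (fun i => f i * c) = sum_lt M f * c.
Proof. induction M as [|M IH]; simpl; [ring | rewrite IH; ring]. Qed.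

Lemma sum_lt_const M c : sum_lt M (fun _ => c) = INR M * c.
Proof. induction M as [|M IH]; simpl sum_lt; [simpl; ring | rewrite IH, S_INR; ring]. Qed.

Lemma sum_lt_zero M : sum_lt M (fun _ => 0) = 0.
Proof. rewrite sum_lt_const; ring. Qed.

Lemma sum_lt_comm M N (f : nat -> nat -> R) :
  sum_lt M (fun p => sum_lt N (fun q => f p q)) = sum_lt N (fun q => sum_lt M (fun p => f p q)).
Proof.
  induction M as [|M IH]; simpl.
  - symmetry; apply sum_lt_zero.
  - rewrite IH, <- sum_lt_add; reflexivity.
Qed.

Lemma Rabs_sum_lt_le M f B :
  (forall i, (i < M)%nat -> Rabs (f i) <= B) -> Rabs (sum_lt M f) <= INR M * B.
Proof.
  induction M as [|M IH]; intros H; simpl sum_lt.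
  - simpl; rewrite Rabs_R0; lra.
  - rewrite S_INR. eapply Rle_trans; [apply Rabs_triang|].
    assert (H1 := IH (fun i Hi => H i ltac:(lia))). assert (H2 := H M ltac:(lia)). lra.
Qed.

Lemma Un_cv_sum_lt M (u : nat -> nat -> R) (l : nat -> R) :
  (forall i, (i < M)%nat -> Un_cv (u i) (l i)) ->
  Un_cv (fun N => sum_lt M (fun i => u i N)) (sum_lt M l).
Proof.
  induction M as [|M IH]; intros H; simpl.
  - intros e He. exists O. intros. unfold Rdist. rewrite Rminus_0_r, Rabs_R0. lra.
  - apply CV_plus; [apply IH; intros; apply H|apply H]; lia.
Qed.

Lemma Rdiv_nonneg x y : 0 <= x -> 0 < y -> 0 <= x / y.
Proof. intros Hx Hy. apply Rmult_le_pos; [exact Hx | left; apply Rinv_0_lt_compat, Hy]. Qed.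

Lemma sum_f_R0_indicator (k : nat) v N : (k <= N)%nat ->
  sum_f_R0 (fun j => if Nat.eq_dec j k then v else 0) N = v.
Proof.
  induction N as [|N IH]; intros H.
  - simpl. replace k with O by lia. reflexivity.
  - rewrite tech5. destruct (Nat.eq_dec (S N) k) as [<-|Hne].
    + rewrite (sum_eq _ (fun _ => 0)), sum_cte; [ring|].
      intros i Hi. destruct (Nat.eq_dec i (S N)); [lia | reflexivity].
    + rewrite IH by lia. ring.
Qed.

Lemma inv_sqr_le_telescope x : 1 <= x ^ 2 -> / x ^ 2 <= / (x - / 2) - / (x + / 2).
Proof.
  intros Hx. replace (/ (x - / 2) - / (x + / 2)) with (/ (x ^ 2 - / 4)) by (field; split; nra).
  apply Rinv_le_contravar; nra.
Qed.

Lemma inv_sqr_dist_sum k N : (1 <= k)%nat ->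
  sum_f_R0 (fun j => if Nat.eq_dec j k then 0 else / (INR j - INR k) ^ 2) N <= 4.
Proof.
  intros Hk1. assert (Hk : 1 <= INR k) by (apply (le_INR 1); exact Hk1).
  set (psi := fun x => / (x - INR k - / 2)).
  assert (Hterm : forall j, (if Nat.eq_dec j k then 0 else / (INR j - INR k) ^ 2)
                            <= psi (INR j) - psi (INR j + 1) + (if Nat.eq_dec j k then 4 else 0)).
  { intros j. unfold psi. destruct (Nat.eq_dec j k) as [->|Hjk].
    - replace (INR k - INR k - / 2) with (- / 2) by ring.
      replace (INR k + 1 - INR k - / 2) with (/ 2) by field.
      rewrite Rinv_opp, !Rinv_inv. lra.
    - assert (Hd : 1 <= (INR j - INR k) ^ 2).
      { destruct (lt_dec j k) as [H|H].
        - assert (H1 : INR (S j) <= INR k) by (apply le_INR; lia). rewrite S_INR in H1. nra.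
        - assert (H1 : INR (S k) <= INR j) by (apply le_INR; lia). rewrite S_INR in H1. nra. }
      rewrite Rplus_0_r. eapply Rle_trans; [apply inv_sqr_le_telescope, Hd|].
      replace (INR j + 1 - INR k - / 2) with (INR j - INR k + / 2) by field. lra. }
  assert (Hsum : forall n, sum_f_R0 (fun j => if Nat.eq_dec j k then 0 else / (INR j - INR k) ^ 2) n
                  <= psi 0 - psi (INR n + 1) + (if le_dec k n then 4 else 0)).
  { intros n. induction n as [|n IH].
    - cbn [sum_f_R0]. specialize (Hterm O). change (INR 0) with 0 in *.
      destruct (Nat.eq_dec 0 k); [lia|]. destruct (le_dec k 0); [lia|]. lra.
    - rewrite tech5, S_INR. specialize (Hterm (S n)). rewrite S_INR in Hterm.
      destruct (Nat.eq_dec (S n) k), (le_dec k n), (le_dec k (S n)); try lia; lra. }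
  specialize (Hsum N).
  assert (H0 : psi 0 < 0) by (unfold psi; apply Rinv_lt_0_compat; lra).
  destruct (le_dec k N) as [HkN|HkN].
  - assert (INR k <= INR N) by (apply le_INR; exact HkN).
    assert (0 < psi (INR N + 1)) by (unfold psi; apply Rinv_0_lt_compat; lra). lra.
  - assert (H : INR (S N) <= INR k) by (apply le_INR; lia). rewrite S_INR in H.
    assert (- psi (INR N + 1) <= 2).
    { unfold psi. rewrite <- Rinv_opp. replace 2 with (/ / 2) by field.
      apply Rinv_le_contravar; lra. }
    lra.
Qed.

Lemma Un_cv_const (x : R) : Un_cv (fun _ => x) x.
Proof. intros e He. exists O. intros. unfold Rdist. rewrite Rminus_diag, Rabs_R0. lra. Qed.

Lemma Un_cv_abs_le (u : nat -> R) L x B :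
  Un_cv u L -> (exists N0, forall N, (N0 <= N)%nat -> Rabs (u N - x) <= B) ->
  Rabs (L - x) <= B.
Proof.
  intros Hu [N0 HN]. apply Rnot_lt_le. intros Hlt.
  destruct (Hu (Rabs (L - x) - B)) as [N1 HN1]; [lra|].
  set (N := max N0 N1). specialize (HN1 N ltac:(lia)). specialize (HN N ltac:(lia)).
  unfold Rdist in HN1.
  assert (Rabs (L - x) <= Rabs (u N - L) + Rabs (u N - x)).
  { replace (L - x) with (- (u N - L) + (u N - x)) by ring.
    eapply Rle_trans; [apply Rabs_triang|]. rewrite Rabs_Ropp. lra. }
  lra.
Qed.

Lemma derivable_pt_lim_local_bound F t0 l eps :
  derivable_pt_lim F t0 l -> 0 < eps ->
  exists d0, 0 < d0 /\ forall h, Rabs h < d0 -> Rabs (F (t0 + h) - F t0 - l * h) <= eps * Rabs h.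
Proof.
  intros Hd Heps. destruct (Hd eps Heps) as [d0 Hd0]. exists d0. split; [apply cond_pos|].
  intros h Hh. destruct (Req_dec h 0) as [->|Hh0].
  - rewrite Rplus_0_r. replace (F t0 - F t0 - l * 0) with 0 by ring. rewrite Rabs_R0. lra.
  - replace (F (t0 + h) - F t0 - l * h) with (h * ((F (t0 + h) - F t0) / h - l)) by (field; exact Hh0).
    rewrite Rabs_mult, Rmult_comm. apply Rmult_le_compat_r; [apply Rabs_pos|].
    left. apply Hd0; assumption.
Qed.

Lemma Un_cv_sum_tail (c : nat -> R) l :
  Un_cv (sum_f_R0 c) l -> forall e, 0 < e -> forall k, exists J, (k <= J)%nat /\
  forall N, (J <= N)%nat -> Rabs (sum_f_R0 c N - sum_f_R0 c J) <= e.
Proof.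
  intros Hl e He k. destruct (Hl (e / 2)) as [J0 HJ0]; [lra|].
  exists (max J0 k). split; [lia|]. intros N HN.
  assert (H1 := HJ0 N ltac:(lia)). assert (H2 := HJ0 (max J0 k) ltac:(lia)). unfold Rdist in *.
  replace (sum_f_R0 c N - sum_f_R0 c (max J0 k))
    with ((sum_f_R0 c N - l) - (sum_f_R0 c (max J0 k) - l)) by ring.
  eapply Rle_trans; [apply Rabs_triang|]. rewrite Rabs_Ropp. lra.
Qed.

Lemma exists_nat_between x : 0 <= x -> exists r : nat, x <= INR r <= x + 1.
Proof.
  intros Hx. destruct (archimed x) as [H1 H2].
  assert (Hz : (0 <= up x)%Z) by (apply le_IZR; lra).
  exists (Z.to_nat (up x)). rewrite INR_IZR_INZ, Z2Nat.id by exact Hz. lra.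
Qed.

Lemma finite_abs_bound (f : nat -> R) J :
  exists L, 0 <= L /\ forall j, (j <= J)%nat -> Rabs (f j) <= L.
Proof.
  induction J as [|J [L [HL H]]].
  - exists (Rabs (f O)). split; [apply Rabs_pos|]. intros j Hj. replace j with O by lia. lra.
  - exists (Rmax L (Rabs (f (S J)))). split.
    + eapply Rle_trans; [apply HL | apply Rmax_l].
    + intros j Hj. destruct (Nat.eq_dec j (S J)) as [->|]; [apply Rmax_r|].
      eapply Rle_trans; [apply H; lia | apply Rmax_l].
Qed.

Lemma PI_gt_3 : 3 < PI.
Proof. assert (H := PI2_3_2); lra. Qed.

Lemma cos_sub_PI2 z : cos (z - PI / 2) = sin z.
Proof. rewrite cos_minus, cos_PI2, sin_PI2. ring. Qed.

Lemma sin_ge_half y : 0 <= y <= 1 -> y / 2 <= sin y.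
Proof.
  intros Hy. assert (HP := PI_gt_3).
  destruct (sin_bound y 0 ltac:(lra) ltac:(lra)) as [Hs _].
  unfold sin_approx, sin_term in Hs. simpl in Hs.
  assert (y * y * y <= y) by nra. nra.
Qed.

Lemma sin_sqr_ge y : y ^ 2 <= 1 -> y ^ 2 / 4 <= sin y ^ 2.
Proof.
  intros Hy. destruct (Rle_or_lt 0 y).
  - assert (Hs := sin_ge_half y ltac:(nra)). nra.
  - assert (Hs := sin_ge_half (- y) ltac:(nra)). rewrite sin_neg in Hs. nra.
Qed.

(** * Dirichlet and Fejer sums *)

Definition cos_sum M a x := sum_lt M (fun p => cos (a + INR p * x)).

Lemma cos_sum_telescope M a x :
  2 * sin (x / 2) * cos_sum M a x = sin (a + (INR M - / 2) * x) - sin (a - x / 2).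
Proof.
  unfold cos_sum. induction M as [|M IH]; simpl sum_lt.
  - change (INR 0) with 0. replace (a + (0 - /2) * x) with (a - x / 2) by field. ring.
  - rewrite Rmult_plus_distr_l, IH, S_INR.
    replace (a + (INR M - /2) * x) with ((a + INR M * x) - x / 2) by field.
    replace (a + (INR M + 1 - /2) * x) with ((a + INR M * x) + x / 2) by field.
    set (B := a + INR M * x). rewrite (sin_minus B), (sin_plus B). ring.
Qed.

Lemma cos_sum_bound M a x :
  sin (x / 2) <> 0 -> Rabs (cos_sum M a x) * Rabs (sin (x / 2)) <= 1.
Proof.
  intros Hs. assert (Ht := cos_sum_telescope M a x).
  assert (H1 := SIN_bound (a + (INR M - / 2) * x)). assert (H2 := SIN_bound (a - x / 2)).
  assert (Hb : Rabs (2 * sin (x / 2) * cos_sum M a x) <= 2).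
  { rewrite Ht. apply Rabs_le. lra. }
  rewrite !Rabs_mult, (Rabs_pos_eq 2) in Hb by lra. lra.
Qed.

Lemma cos_sum_full_turns (M r : nat) a :
  (0 < r < M)%nat -> cos_sum M a (2 * PI * INR r / INR M) = 0.
Proof.
  intros Hr. assert (HP := PI_gt_3).
  assert (HrM : 0 < INR r < INR M) by (split; [apply lt_0_INR | apply lt_INR]; lia).
  set (x := 2 * PI * INR r / INR M).
  assert (Hs : sin (x / 2) <> 0).
  { apply Rgt_not_eq, sin_gt_0; unfold x.
    - apply Rdiv_lt_0_compat; [|lra]. apply Rdiv_lt_0_compat; nra.
    - apply (Rmult_lt_reg_r (2 * INR M)); [lra|]. field_simplify; nra. }
  assert (Ht := cos_sum_telescope M a x).
  replace (a + (INR M - / 2) * x) with ((a - x / 2) + 2 * INR r * PI) in Ht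
    by (unfold x; field; lra).
  rewrite sin_period, Rminus_diag in Ht.
  apply Rmult_integral in Ht as [Ht|Ht]; [lra | exact Ht].
Qed.

Definition fejer M a x :=
  sum_lt M (fun p => sum_lt M (fun q => cos (a + (INR p - INR q) * x))).

Lemma fejer_split M a x :
  fejer M a x = cos_sum M a x * cos_sum M 0 x + cos_sum M (a - PI / 2) x * cos_sum M (- (PI / 2)) x.
Proof.
  unfold fejer, cos_sum. rewrite <- !sum_lt_scal_r, <- sum_lt_add.
  apply sum_lt_ext; intros p _. rewrite <- !sum_lt_scal_l, <- sum_lt_add.
  apply sum_lt_ext; intros q _.
  replace (a + (INR p - INR q) * x) with ((a + INR p * x) - (0 + INR q * x)) by ring.
  replace (a - PI / 2 + INR p * x) with ((a + INR p * x) - PI / 2) by ring.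
  replace (- (PI / 2) + INR q * x) with ((0 + INR q * x) - PI / 2) by ring.
  rewrite !cos_sub_PI2, cos_minus. ring.
Qed.

Lemma fejer_bound M a x :
  sin (x / 2) <> 0 -> Rabs (fejer M a x) * sin (x / 2) ^ 2 <= 2.
Proof.
  intros Hs. rewrite fejer_split.
  set (s := Rabs (sin (x / 2))).
  assert (Hprod : forall u v, Rabs (cos_sum M u x * cos_sum M v x) * (s * s) <= 1).
  { intros u v. rewrite Rabs_mult.
    replace (Rabs (cos_sum M u x) * Rabs (cos_sum M v x) * (s * s))
      with ((Rabs (cos_sum M u x) * s) * (Rabs (cos_sum M v x) * s)) by ring.
    rewrite <- (Rmult_1_l 1). apply Rmult_le_compat; try apply cos_sum_bound; try exact Hs;
      apply Rmult_le_pos; apply Rabs_pos. }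
  replace (sin (x / 2) ^ 2) with (s * s)
    by (unfold s; rewrite <- Rabs_mult, Rabs_pos_eq; [ring | nra]).
  assert (Hss : 0 <= s * s) by (apply Rmult_le_pos; apply Rabs_pos).
  assert (H1 := Hprod a 0). assert (H2 := Hprod (a - PI / 2) (- (PI / 2))).
  eapply Rle_trans; [apply Rmult_le_compat_r; [exact Hss | apply Rabs_triang]|]. lra.
Qed.

Lemma fejer_decay M a x : x ^ 2 <= 4 -> Rabs (fejer M a x) * x ^ 2 <= 32.
Proof.
  intros Hx. assert (Hs := sin_sqr_ge (x / 2) ltac:(nra)).
  assert (HF := Rabs_pos (fejer M a x)).
  destruct (Req_dec (sin (x / 2)) 0) as [E|E].
  - rewrite E in Hs. nra.
  - assert (Hb := fejer_bound M a x E). nra.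
Qed.

Lemma fejer_abs_le M a x : Rabs (fejer M a x) <= INR M ^ 2.
Proof.
  unfold fejer. replace (INR M ^ 2) with (INR M * (INR M * 1)) by ring.
  apply Rabs_sum_lt_le; intros p _. apply Rabs_sum_lt_le; intros q _.
  apply Rabs_le, COS_bound.
Qed.

Lemma fejer_at_0 M : fejer M 0 0 = INR M ^ 2.
Proof.
  unfold fejer. replace (INR M ^ 2) with (INR M * (INR M * 1)) by ring.
  rewrite <- sum_lt_const. apply sum_lt_ext; intros p _.
  rewrite <- sum_lt_const. apply sum_lt_ext; intros q _.
  rewrite Rmult_0_r, Rplus_0_r, cos_0. reflexivity.
Qed.

Section CosSumVanishing.

Variables (M : nat) (x : R).
Hypothesis cos_sum_0 : forall a, cos_sum M a x = 0.

Lemma fejer_vanish a : fejer M a x = 0.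
Proof. rewrite fejer_split, !cos_sum_0. ring. Qed.

Lemma fejer_moment_vanish a :
  sum_lt M (fun p => sum_lt M (fun q => (INR p - INR q) * cos (a + (INR p - INR q) * x))) = 0.
Proof.
  assert (Erow : forall p, sum_lt M (fun q => cos (a + (INR p - INR q) * x)) = 0).
  { intros p. rewrite <- (cos_sum_0 (- (a + INR p * x))). apply sum_lt_ext; intros q _.
    rewrite <- cos_neg. f_equal. ring. }
  assert (Ecol : forall q, sum_lt M (fun p => cos (a + (INR p - INR q) * x)) = 0).
  { intros q. rewrite <- (cos_sum_0 (a - INR q * x)). apply sum_lt_ext; intros p _.
    f_equal. ring. }
  assert (Esplit : forall p q, (INR p - INR q) * cos (a + (INR p - INR q) * x)
      = INR p * cos (a + (INR p - INR q) * x) - INR q * cos (a + (INR p - INR q) * x))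
    by (intros; ring).
  rewrite (sum_lt_ext _ _ (fun p => INR p * sum_lt M (fun q => cos (a + (INR p - INR q) * x))
                                     - sum_lt M (fun q => INR q * cos (a + (INR p - INR q) * x)))).
  2:{ intros p _. rewrite <- sum_lt_scal_l, <- sum_lt_sub. apply sum_lt_ext; intros q _. apply Esplit. }
  rewrite sum_lt_sub, sum_lt_comm.
  rewrite (sum_lt_ext _ _ (fun _ => 0)), (sum_lt_ext M (fun q => sum_lt M _) (fun _ => 0)).
  - rewrite sum_lt_zero. ring.
  - intros q _. rewrite sum_lt_scal_l, Ecol. ring.
  - intros p _. rewrite Erow. ring.
Qed.

End CosSumVanishing.

Definition grid_sum M t0 d (f : R -> R) :=
  sum_lt M (fun p => sum_lt M (fun q => f (t0 + (INR p - INR q) * d))).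

Lemma grid_sum_add M t0 d f g :
  grid_sum M t0 d (fun s => f s + g s) = grid_sum M t0 d f + grid_sum M t0 d g.
Proof.
  unfold grid_sum. rewrite <- sum_lt_add. apply sum_lt_ext; intros.
  apply sum_lt_add.
Qed.

Lemma grid_sum_scal M t0 d c f :
  grid_sum M t0 d (fun s => c * f s) = c * grid_sum M t0 d f.
Proof.
  unfold grid_sum. rewrite <- sum_lt_scal_l. apply sum_lt_ext; intros.
  apply sum_lt_scal_l.
Qed.

Lemma grid_sum_abs_le M t0 d f B :
  (forall h, Rabs h <= INR M * Rabs d -> Rabs (f (t0 + h)) <= B) ->
  Rabs (grid_sum M t0 d f) <= INR M ^ 2 * B.
Proof.
  intros H. unfold grid_sum. replace (INR M ^ 2 * B) with (INR M * (INR M * B)) by ring.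
  apply Rabs_sum_lt_le; intros p Hp. apply Rabs_sum_lt_le; intros q Hq.
  apply H. rewrite Rabs_mult. apply Rmult_le_compat_r; [apply Rabs_pos|].
  apply lt_INR in Hp, Hq. assert (H0 := pos_INR p). assert (H1 := pos_INR q).
  apply Rabs_le. lra.
Qed.

Lemma Un_cv_grid_sum M t0 d (f : nat -> R -> R) g :
  (forall s, Un_cv (fun N => f N s) (g s)) ->
  Un_cv (fun N => grid_sum M t0 d (f N)) (grid_sum M t0 d g).
Proof.
  intros H. unfold grid_sum.
  apply (Un_cv_sum_lt M (fun p N => sum_lt M (fun q => f N (t0 + (INR p - INR q) * d)))).
  intros p _. apply (Un_cv_sum_lt M (fun q N => f N (t0 + (INR p - INR q) * d))).
  intros q _. apply H.
Qed.

Lemma grid_sum_cos_mul M t0 d lj lk b :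
  grid_sum M t0 d (fun s => cos (lj * s - b) * cos (lk * s - b)) =
  / 2 * (fejer M ((lj - lk) * t0) ((lj - lk) * d)
         + fejer M ((lj + lk) * t0 - 2 * b) ((lj + lk) * d)).
Proof.
  unfold grid_sum, fejer. rewrite <- sum_lt_add, <- sum_lt_scal_l.
  apply sum_lt_ext; intros p _. rewrite <- sum_lt_add, <- sum_lt_scal_l.
  apply sum_lt_ext; intros q _.
  set (s := t0 + (INR p - INR q) * d).
  replace ((lj - lk) * t0 + (INR p - INR q) * ((lj - lk) * d))
    with ((lj * s - b) - (lk * s - b)) by (unfold s; ring).
  replace ((lj + lk) * t0 - 2 * b + (INR p - INR q) * ((lj + lk) * d))
    with ((lj * s - b) + (lk * s - b)) by (unfold s; ring).
  rewrite (cos_minus (lj * s - b)), (cos_plus (lj * s - b)). field.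
Qed.

Lemma grid_sum_affine_cos M t0 d lk b alpha beta :
  (forall a, cos_sum M a (lk * d) = 0) ->
  grid_sum M t0 d (fun s => (alpha + beta * (s - t0)) * cos (lk * s - b)) = 0.
Proof.
  intros H0.
  transitivity (alpha * fejer M (lk * t0 - b) (lk * d) + beta * d *
    sum_lt M (fun p => sum_lt M (fun q =>
      (INR p - INR q) * cos (lk * t0 - b + (INR p - INR q) * (lk * d))))).
  - unfold grid_sum, fejer. rewrite <- !sum_lt_scal_l, <- sum_lt_add.
    apply sum_lt_ext; intros p _. rewrite <- !sum_lt_scal_l, <- sum_lt_add.
    apply sum_lt_ext; intros q _.
    replace (lk * (t0 + (INR p - INR q) * d) - b)
      with (lk * t0 - b + (INR p - INR q) * (lk * d)) by ring.
    ring.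
  - rewrite fejer_vanish, fejer_moment_vanish by exact H0. ring.
Qed.

Definition grid_step (M r : nat) (lk : R) := 2 * PI * INR r / (INR M * lk).

Lemma cos_sum_grid_step M r lk a :
  0 < lk -> (0 < r < M)%nat -> cos_sum M a (lk * grid_step M r lk) = 0.
Proof.
  intros Hlk Hr. assert (HM : 0 < INR M) by (apply lt_0_INR; lia).
  unfold grid_step. replace (lk * (2 * PI * INR r / (INR M * lk))) with (2 * PI * INR r / INR M)
    by (field; lra).
  apply cos_sum_full_turns, Hr.
Qed.

Lemma grid_step_double M r lk :
  0 < lk -> 0 < INR M -> (lk + lk) * grid_step M r lk = lk * grid_step M (2 * r) lk.
Proof. intros Hlk HM. unfold grid_step. rewrite mult_INR. simpl INR. field. lra. Qed.

(** * Cosine series with well-separated frequencies *)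

Definition neighbour_sum (c : nat -> R) (k N : nat) :=
  sum_f_R0 (fun j => if Nat.eq_dec j k then 0 else c j / (INR j - INR k) ^ 2) N.

Lemma series_peak_estimate (c A : nat -> R) (k J : nat) (Q C K : R) :
  (forall j, 0 <= c j) -> 0 < C -> 8 * K <= C ^ 2 -> (k <= J)%nat ->
  A k = Q / 2 ->
  (forall j, Rabs (A j) <= Q) ->
  (forall j, (j <= J)%nat -> j <> k -> 0 < c j ->
     Rabs (A j) <= Q / (C ^ 2 * (INR j - INR k) ^ 2)) ->
  neighbour_sum c k J <= K * c k ->
  (forall N, (J <= N)%nat -> Rabs (sum_f_R0 c N - sum_f_R0 c J) <= c k / 8) ->
  forall N, (J <= N)%nat ->
  Rabs (sum_f_R0 (fun j => c j * A j) N - c k * (Q / 2)) <= Q * c k / 4.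
Proof.
  intros Hc HC HKC HkJ HAk HAall HAnear Hns Htail N HN.
  assert (HQ : 0 <= Q) by (specialize (HAall k); pose proof (Rabs_pos (A k)); lra).
  set (err := fun j => if Nat.eq_dec j k then 0
                       else if le_dec j J then Q / C ^ 2 * (c j / (INR j - INR k) ^ 2)
                       else Q * c j).
  assert (Hterm : forall j,
    Rabs (c j * A j - (if Nat.eq_dec j k then c k * (Q / 2) else 0)) <= err j).
  { intros j. unfold err. destruct (Nat.eq_dec j k) as [->|Hjk].
    - rewrite HAk, Rminus_diag, Rabs_R0. lra.
    - rewrite Rminus_0_r, Rabs_mult, (Rabs_pos_eq (c j)) by apply Hc.
      destruct (le_dec j J) as [HjJ|HjJ].
      + destruct (Rle_lt_or_eq_dec 0 (c j) (Hc j)) as [Hcj|<-]; [|rewrite Rmult_0_l; unfold Rdiv; lra].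
        assert (Hd : INR j - INR k <> 0) by (intro E; apply Hjk, INR_eq; lra).
        eapply Rle_trans; [apply Rmult_le_compat_l; [lra | exact (HAnear j HjJ Hjk Hcj)]|].
        right. field. split; [exact Hd | lra].
      + rewrite Rmult_comm. apply Rmult_le_compat_r; [apply Hc | apply HAall]. }
  assert (Herr : forall d, sum_f_R0 err (J + d) =
                 Q / C ^ 2 * neighbour_sum c k J + Q * (sum_f_R0 c (J + d) - sum_f_R0 c J)).
  { induction d as [|d IH].
    - rewrite Nat.add_0_r, Rminus_diag, Rmult_0_r, Rplus_0_r. unfold neighbour_sum.
      rewrite scal_sum. apply sum_eq. intros i Hi. unfold err.
      destruct (Nat.eq_dec i k); [ring|]. destruct (le_dec i J); [ring | lia].
    - rewrite Nat.add_succ_r, !tech5, IH. unfold err.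
      destruct (Nat.eq_dec (S (J + d)) k); [lia|]. destruct (le_dec (S (J + d)) J); [lia|]. ring. }
  rewrite <- (sum_f_R0_indicator k (c k * (Q / 2)) N) by lia. rewrite <- minus_sum.
  eapply Rle_trans; [apply sum_f_R0_triangle|].
  eapply Rle_trans; [apply sum_Rle; intros; apply Hterm|].
  replace N with (J + (N - J))%nat by lia. rewrite Herr.
  assert (Hck : 0 <= c k) by apply Hc.
  assert (Q / C ^ 2 * neighbour_sum c k J <= Q * (c k / 8)).
  { apply (Rmult_le_reg_r (C ^ 2)); [nra|].
    replace (Q / C ^ 2 * neighbour_sum c k J * C ^ 2) with (Q * neighbour_sum c k J) by (field; lra).
    assert (Q * neighbour_sum c k J <= Q * (K * c k)) by (apply Rmult_le_compat_l; lra).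
    assert (Q * c k * (8 * K) <= Q * c k * C ^ 2) by (apply Rmult_le_compat_l; nra).
    nra. }
  assert (Q * (sum_f_R0 c (J + (N - J)) - sum_f_R0 c J) <= Q * (c k / 8))
    by (apply Rmult_le_compat_l; [exact HQ | eapply Rle_trans; [apply Rle_abs | apply Htail; lia]]).
  lra.
Qed.

(* [fejer_decay] at [x = z d]: separation gives [(x M)^2 >= 4 pi^2 C^2 (j - k)^2], and the
   choice of [M] gives [|x| <= pi / 2]. *)
Lemma fejer_offpeak_bound M (r : nat) (a z j k lk Lam C : R) :
  0 < INR M -> 0 < lk -> 1 <= k -> 1 <= C -> C * k <= INR r -> j <> k ->
  (j - k) ^ 2 * lk ^ 2 <= z ^ 2 * k ^ 2 -> Rabs z <= Lam + lk ->
  4 * INR r * (Lam + lk) <= INR M * lk ->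
  Rabs (fejer M a (z * grid_step M r lk)) <= INR M ^ 2 / (C ^ 2 * (j - k) ^ 2).
Proof.
  intros HM Hlk Hk HC Hr Hjk Hsep Hz HMr.
  assert (HP := PI_gt_3). assert (HP4 := PI_4).
  set (x := z * grid_step M r lk).
  set (D := C ^ 2 * (j - k) ^ 2).
  assert (HD : 0 < D) by (unfold D; assert (j - k <> 0) by lra; apply Rmult_lt_0_compat; nra).
  assert (Hxy : x * INR M * lk = 2 * PI * INR r * z) by (unfold x, grid_step; field; lra).
  assert (Hr0 : 1 <= INR r) by nra.
  assert (Hzr : D * lk ^ 2 <= z ^ 2 * INR r ^ 2).
  { assert (HCr : (C * k) ^ 2 <= INR r ^ 2) by (apply pow_incr; nra).
    assert (z ^ 2 * (C * k) ^ 2 <= z ^ 2 * INR r ^ 2) by (apply Rmult_le_compat_l; nra).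
    unfold D. nra. }
  assert (HxD : 32 * D <= (x * INR M) ^ 2).
  { assert (E : (x * INR M) ^ 2 * lk ^ 2 = 4 * PI ^ 2 * (z ^ 2 * INR r ^ 2))
      by (replace ((x * INR M) ^ 2 * lk ^ 2) with ((x * INR M * lk) ^ 2) by ring; rewrite Hxy; ring).
    apply (Rmult_le_reg_r (lk ^ 2)); [nra|]. rewrite E.
    assert (H32 : 32 <= 4 * PI ^ 2) by nra.
    assert (0 <= D * lk ^ 2) by nra.
    assert (32 * (D * lk ^ 2) <= 4 * PI ^ 2 * (D * lk ^ 2)) by (apply Rmult_le_compat_r; lra).
    assert (4 * PI ^ 2 * (D * lk ^ 2) <= 4 * PI ^ 2 * (z ^ 2 * INR r ^ 2)) by (apply Rmult_le_compat_l; nra).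
    lra. }
  assert (Hx4 : x ^ 2 <= 4).
  { assert (Habs : Rabs (x * INR M * lk) <= PI / 2 * (INR M * lk)).
    { rewrite Hxy, Rabs_mult, (Rabs_pos_eq (2 * PI * INR r)) by nra.
      assert (Rabs z * INR r <= (Lam + lk) * INR r) by (apply Rmult_le_compat_r; lra). nra. }
    rewrite !Rabs_mult, (Rabs_pos_eq (INR M)), (Rabs_pos_eq lk) in Habs by lra.
    assert (Rabs x <= PI / 2) by (apply (Rmult_le_reg_r (INR M * lk)); nra).
    rewrite <- pow2_abs. assert (0 <= Rabs x) by apply Rabs_pos. nra. }
  assert (Hdec := fejer_decay M a x Hx4).
  assert (HF := Rabs_pos (fejer M a x)).
  apply (Rmult_le_reg_r D); [exact HD|].
  replace (INR M ^ 2 / D * D) with (INR M ^ 2) by (field; lra).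
  assert (Rabs (fejer M a x) * (32 * D) <= Rabs (fejer M a x) * (x * INR M) ^ 2)
    by (apply Rmult_le_compat_l; lra).
  assert (Rabs (fejer M a x) * x ^ 2 * INR M ^ 2 <= 32 * INR M ^ 2)
    by (apply Rmult_le_compat_r; nra).
  nra.
Qed.

Lemma grid_sum_cos_offpeak_bound M t0 (r : nat) b lj lk (j k Lam C : R) :
  0 < INR M -> 0 < lk -> 1 <= k -> 1 <= C -> C * k <= INR r -> j <> k ->
  0 <= lj <= Lam -> (j - k) ^ 2 * lk ^ 2 <= (lj - lk) ^ 2 * k ^ 2 ->
  4 * INR r * (Lam + lk) <= INR M * lk ->
  Rabs (grid_sum M t0 (grid_step M r lk) (fun s => cos (lj * s - b) * cos (lk * s - b)))
  <= INR M ^ 2 / (C ^ 2 * (j - k) ^ 2).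
Proof.
  intros HM Hlk Hk HC Hr Hjk Hlj Hsep HMLam.
  assert (Hsep' : (j - k) ^ 2 * lk ^ 2 <= (lj + lk) ^ 2 * k ^ 2).
  { assert ((lj - lk) ^ 2 * k ^ 2 <= (lj + lk) ^ 2 * k ^ 2) by (apply Rmult_le_compat_r; nra).
    lra. }
  assert (B1 := fejer_offpeak_bound M r ((lj - lk) * t0) (lj - lk) j k lk Lam C
                  HM Hlk Hk HC Hr Hjk Hsep ltac:(apply Rabs_le; lra) HMLam).
  assert (B2 := fejer_offpeak_bound M r ((lj + lk) * t0 - 2 * b) (lj + lk) j k lk Lam C
                  HM Hlk Hk HC Hr Hjk Hsep' ltac:(apply Rabs_le; lra) HMLam).
  rewrite grid_sum_cos_mul, Rabs_mult, (Rabs_pos_eq (/ 2)) by lra.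
  eapply Rle_trans; [apply Rmult_le_compat_l; [lra | apply Rabs_triang]|]. lra.
Qed.

(* The grid sum annihilates affine functions, so only the remainder [eps |h|] counts. *)
Lemma grid_sum_derivable_bound M t0 d lk b (F : R -> R) l eps :
  0 <= eps -> (forall a, cos_sum M a (lk * d) = 0) ->
  (forall h, Rabs h <= INR M * Rabs d -> Rabs (F (t0 + h) - F t0 - l * h) <= eps * Rabs h) ->
  Rabs (grid_sum M t0 d (fun s => F s * cos (lk * s - b))) <= INR M ^ 2 * (eps * (INR M * Rabs d)).
Proof.
  intros Heps Hcs HF.
  replace (grid_sum M t0 d (fun s => F s * cos (lk * s - b)))
    with (grid_sum M t0 d (fun s => (F s - F t0 - l * (s - t0)) * cos (lk * s - b))
          + grid_sum M t0 d (fun s => (F t0 + l * (s - t0)) * cos (lk * s - b))).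
  2:{ rewrite <- grid_sum_add. unfold grid_sum. apply sum_lt_ext; intros.
      apply sum_lt_ext; intros. ring. }
  rewrite grid_sum_affine_cos, Rplus_0_r by exact Hcs.
  apply grid_sum_abs_le. intros h Hh.
  replace (t0 + h - t0) with h by ring. rewrite Rabs_mult.
  assert (Hc := COS_bound (lk * (t0 + h) - b)).
  assert (Hcos : Rabs (cos (lk * (t0 + h) - b)) <= 1) by (apply Rabs_le; lra).
  assert (H1 := HF h Hh). assert (H2 := Rabs_pos (F (t0 + h) - F t0 - l * h)).
  assert (eps * Rabs h <= eps * (INR M * Rabs d)) by (apply Rmult_le_compat_l; assumption).
  assert (H3 := Rabs_pos (cos (lk * (t0 + h) - b))). nra.
Qed.

Lemma exists_grid_size (r : nat) Lam lk :
  0 <= Lam -> 0 < lk -> exists M : nat, (2 * r < M)%nat /\ 4 * INR r * (Lam + lk) <= INR M * lk.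
Proof.
  intros HLam Hlk. assert (Hr := pos_INR r).
  assert (Hq : 0 <= 4 * INR r * (Lam + lk) / lk) by (apply Rdiv_nonneg; nra).
  destruct (exists_nat_between (4 * INR r * (Lam + lk) / lk + 2 * INR r + 1)) as [M [HM _]]; [lra|].
  exists M. split.
  - apply INR_lt. rewrite mult_INR. simpl INR. lra.
  - apply (Rmult_le_reg_r (/ lk)); [apply Rinv_0_lt_compat; lra|].
    replace (INR M * lk * / lk) with (INR M) by (field; lra). unfold Rdiv in HM. lra.
Qed.

Definition cos_term (c lam : nat -> R) (b t : R) (j : nat) := c j * cos (lam j * t - b).

Record peak_index (c lam : nat -> R) (K B : R) (k : nat) : Prop := {
  peak_index_pos : (1 <= k)%nat;
  peak_coef_pos : 0 < c k;
  peak_coef_freq : c k * lam k = INR k;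
  peak_freq_large : B * INR k <= lam k;
  peak_separated : forall j, 0 < c j -> j <> k ->
    (INR j - INR k) ^ 2 * lam k ^ 2 <= (lam j - lam k) ^ 2 * INR k ^ 2;
  peak_neighbour_sum : forall N, neighbour_sum c k N <= K * c k }.

Section CosSeries.

Variables (c lam : nat -> R) (b : R).
Hypothesis c_nonneg : forall j, 0 <= c j.
Hypothesis c_summable : exists l, Un_cv (sum_f_R0 c) l.

Lemma Rabs_cos_term_le t j : Rabs (cos_term c lam b t j) <= c j.
Proof.
  unfold cos_term. rewrite Rabs_mult, (Rabs_pos_eq (c j)) by apply c_nonneg.
  assert (H := COS_bound (lam j * t - b)).
  assert (Rabs (cos (lam j * t - b)) <= 1) by (apply Rabs_le; lra).
  assert (Hc := c_nonneg j). assert (Hp := Rabs_pos (cos (lam j * t - b))). nra.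
Qed.

Lemma cos_series_cv t : exists l, Un_cv (sum_f_R0 (cos_term c lam b t)) l.
Proof.
  destruct c_summable as [lc Hlc].
  destruct (Rseries_CV_comp (fun j => cos_term c lam b t j + c j) (fun j => 2 * c j)) as [lu Hlu].
  - intros j. assert (H := Rabs_cos_term_le t j).
    assert (H1 := Rle_abs (cos_term c lam b t j)).
    assert (H2 := Rle_abs (- cos_term c lam b t j)). rewrite Rabs_Ropp in H2. lra.
  - exists (2 * lc). apply (Un_cv_ext (fun N => 2 * sum_f_R0 c N)).
    + intros N. rewrite scal_sum. apply sum_eq. intros. ring.
    + apply (CV_mult (fun _ => 2)); [apply Un_cv_const | exact Hlc].
  - exists (lu - lc).
    apply (Un_cv_ext (fun N => sum_f_R0 (fun j => cos_term c lam b t j + c j) N - sum_f_R0 c N)).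
    + intros N. rewrite <- minus_sum. apply sum_eq. intros. ring.
    + apply CV_minus; assumption.
Qed.

Lemma cos_series_continuity F :
  (forall t, Un_cv (sum_f_R0 (cos_term c lam b t)) (F t)) -> continuity F.
Proof.
  intros HF t. destruct c_summable as [lc Hlc].
  apply (CVU_continuity (fun N t => sum_f_R0 (cos_term c lam b t) N) F t (mkposreal 1 Rlt_0_1)).
  - intros e He. destruct (Hlc e He) as [N0 HN0]. exists N0. intros N y HN _.
    assert (H := sum_maj1 (fun j t => cos_term c lam b t j) c y (F y) lc N (HF y) Hlc
                   (fun j => Rabs_cos_term_le y j)).
    unfold SP in H. specialize (HN0 N HN). unfold Rdist in HN0.
    apply Rabs_def2 in HN0. eapply Rle_lt_trans; [apply H | lra].
  - intros N y _. induction N as [|N IH]; simpl; unfold cos_term; [|apply continuity_pt_plus; [exact IH|]]; reg.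
  - unfold Boule. rewrite Rminus_diag, Rabs_R0. simpl. lra.
Qed.


Hypothesis lam_nonneg : forall j, 0 < c j -> 0 <= lam j.
Variable F : R -> R.
Hypothesis F_sum : forall t, Un_cv (sum_f_R0 (cos_term c lam b t)) (F t).

Lemma grid_sum_cos_series M t0 d (w : R -> R) :
  Un_cv (sum_f_R0 (fun j => c j * grid_sum M t0 d (fun s => cos (lam j * s - b) * w s)))
        (grid_sum M t0 d (fun s => F s * w s)).
Proof.
  apply (Un_cv_ext (fun N => grid_sum M t0 d (fun s => sum_f_R0 (cos_term c lam b s) N * w s))).
  - intros N. induction N as [|N IH]; simpl.
    + rewrite <- grid_sum_scal. unfold grid_sum, cos_term. apply sum_lt_ext; intros.
      apply sum_lt_ext; intros. ring.
    + rewrite <- IH, <- grid_sum_scal, <- grid_sum_add. unfold grid_sum, cos_term.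
      apply sum_lt_ext; intros. apply sum_lt_ext; intros. ring.
  - apply Un_cv_grid_sum. intros s.
    apply (CV_mult (fun N => sum_f_R0 (cos_term c lam b s) N) (fun _ => w s)); [apply F_sum | apply Un_cv_const].
Qed.

Lemma grid_sum_peak_lower_bound K B k t0 J (r M : nat) Lam C :
  peak_index c lam K B k -> 1 <= C -> 8 * K <= C ^ 2 ->
  (k <= J)%nat -> (forall N, (J <= N)%nat -> Rabs (sum_f_R0 c N - sum_f_R0 c J) <= c k / 8) ->
  (forall j, (j <= J)%nat -> Rabs (lam j) <= Lam) ->
  C * INR k <= INR r -> (2 * r < M)%nat -> 4 * INR r * (Lam + lam k) <= INR M * lam k ->
  INR M ^ 2 * c k / 4 <= Rabs (grid_sum M t0 (grid_step M r (lam k)) (fun s => F s * cos (lam k * s - b))).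
Proof.
  intros Hpk HC HKC HkJ Htail HlamJ Hr HrM HMLam.
  assert (Hk : 1 <= INR k) by exact (le_INR 1 k (peak_index_pos _ _ _ _ _ Hpk)).
  assert (Hck := peak_coef_pos _ _ _ _ _ Hpk).
  assert (Hlk : 0 < lam k) by (assert (H := peak_coef_freq _ _ _ _ _ Hpk); nra).
  assert (Hr0 : (0 < r)%nat) by (apply INR_lt; simpl; nra).
  assert (HM : 0 < INR M) by (apply lt_0_INR; lia).
  set (d := grid_step M r (lam k)).
  set (A := fun j => grid_sum M t0 d (fun s => cos (lam j * s - b) * cos (lam k * s - b))).
  assert (HA : forall j, A j = / 2 * (fejer M ((lam j - lam k) * t0) ((lam j - lam k) * d)
                                   + fejer M ((lam j + lam k) * t0 - 2 * b) ((lam j + lam k) * d)))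
    by (intros; apply grid_sum_cos_mul).
  assert (HAk : A k = INR M ^ 2 / 2).
  { rewrite HA, Rminus_diag, !Rmult_0_l, fejer_at_0. unfold d. rewrite grid_step_double by lra.
    rewrite fejer_vanish by (intros a; apply cos_sum_grid_step; [lra | lia]).
    field. }
  assert (HAall : forall j, Rabs (A j) <= INR M ^ 2).
  { intros j. rewrite HA, Rabs_mult, Rabs_pos_eq by lra.
    assert (H1 := fejer_abs_le M ((lam j - lam k) * t0) ((lam j - lam k) * d)).
    assert (H2 := fejer_abs_le M ((lam j + lam k) * t0 - 2 * b) ((lam j + lam k) * d)).
    assert (H3 := Rabs_triang (fejer M ((lam j - lam k) * t0) ((lam j - lam k) * d))
                              (fejer M ((lam j + lam k) * t0 - 2 * b) ((lam j + lam k) * d))).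
    lra. }
  assert (HAnear : forall j, (j <= J)%nat -> j <> k -> 0 < c j ->
                   Rabs (A j) <= INR M ^ 2 / (C ^ 2 * (INR j - INR k) ^ 2)).
  { intros j HjJ Hjk Hcj. assert (HLj := HlamJ j HjJ). assert (Hlj := lam_nonneg j Hcj).
    rewrite Rabs_pos_eq in HLj by exact Hlj.
    apply (grid_sum_cos_offpeak_bound M t0 r b (lam j) (lam k) (INR j) (INR k) Lam C);
      try assumption; try lra.
    - intro E. apply Hjk, INR_eq, E.
    - exact (peak_separated _ _ _ _ _ Hpk j Hcj Hjk). }
  assert (Hest := series_peak_estimate c A k J (INR M ^ 2) C K c_nonneg ltac:(lra) HKC HkJ
                    HAk HAall HAnear (peak_neighbour_sum _ _ _ _ _ Hpk J) Htail).
  assert (Hlim := Un_cv_abs_le _ _ _ _ (grid_sum_cos_series M t0 d (fun s => cos (lam k * s - b)))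
                    (ex_intro _ J Hest)).
  cbv beta in Hlim.
  assert (Habs := Rabs_triang_inv (c k * (INR M ^ 2 / 2))
                                  (grid_sum M t0 d (fun s => F s * cos (lam k * s - b)))).
  rewrite Rabs_minus_sym, (Rabs_pos_eq (c k * _)) in Habs by (apply Rmult_le_pos; nra).
  lra.
Qed.

(* With [r] about [C k] the lower bound [M^2 c_k / 4] beats the upper bound
   [M^2 eps (M d) = M^2 eps 2 pi r / lam_k] because [c_k lam_k = k]. *)
Theorem cos_series_nowhere_differentiable K :
  0 < K -> (forall B, exists k, peak_index c lam K B k) -> forall t l, ~ derivable_pt_lim F t l.
Proof.
  intros HK Hpeak t0 l Hd. assert (HP := PI_gt_3). assert (HP4 := PI_4).
  set (C := 8 * K + 1). assert (HC : 1 <= C) by (unfold C; lra).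
  assert (HKC : 8 * K <= C ^ 2) by (unfold C; nra).
  set (eps := / (128 * C)). assert (Heps : 0 < eps) by (unfold eps; apply Rinv_0_lt_compat; lra).
  destruct (derivable_pt_lim_local_bound F t0 l eps Hd Heps) as [d0 [Hd0 Hloc]].
  destruct (Hpeak (32 * C / d0)) as [k Hpk].
  assert (Hk : 1 <= INR k) by exact (le_INR 1 k (peak_index_pos _ _ _ _ _ Hpk)).
  assert (Hck := peak_coef_pos _ _ _ _ _ Hpk). assert (Hbal := peak_coef_freq _ _ _ _ _ Hpk).
  assert (Hlk : 0 < lam k) by nra.
  assert (Hhigh : 32 * C * INR k <= d0 * lam k).
  { assert (H := peak_freq_large _ _ _ _ _ Hpk). apply (Rmult_le_compat_l d0) in H; [|lra].
    replace (d0 * (32 * C / d0 * INR k)) with (32 * C * INR k) in H by (field; lra). lra. }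
  destruct (exists_nat_between (C * INR k)) as [r [Hr1 Hr2]]; [nra|].
  assert (Hr : 1 <= INR r) by nra.
  destruct c_summable as [lc Hlc].
  destruct (Un_cv_sum_tail c lc Hlc (c k / 8) ltac:(lra) k) as [J [HkJ HJ]].
  destruct (finite_abs_bound lam J) as [Lam [HLam HlamJ]].
  destruct (exists_grid_size r Lam (lam k) HLam Hlk) as [M [HrM HMLam]].
  assert (HM : 0 < INR M) by (apply lt_0_INR; lia).
  set (d := grid_step M r (lam k)).
  assert (HMd : INR M * d * lam k = 2 * PI * INR r) by (unfold d, grid_step; field; lra).
  assert (Hdpos : 0 < d) by (unfold d, grid_step; apply Rdiv_lt_0_compat; nra).
  assert (Hlow := grid_sum_peak_lower_bound K _ k t0 J r M Lam C Hpk HC HKC HkJ HJ HlamJ Hr1 HrM HMLam).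
  assert (Hup := grid_sum_derivable_bound M t0 d (lam k) b F l eps ltac:(lra)
                   ltac:(intros a; apply cos_sum_grid_step; [lra | split; [apply INR_lt; simpl; nra | lia]])
                   ltac:(intros h Hh; apply Hloc; rewrite (Rabs_pos_eq d) in Hh by lra; nra)).
  fold d in Hlow. rewrite (Rabs_pos_eq d) in Hup by lra.
  assert (Hgap : c k / 4 <= eps * (INR M * d)) by (apply (Rmult_le_reg_l (INR M ^ 2)); nra).
  assert (Hk4 : INR k / 4 <= eps * (2 * PI * INR r)) by (rewrite <- Hbal, <- HMd; nra).
  assert (HepsC' : eps * C = / 128) by (unfold eps; field; lra).
  assert (eps * INR r <= 2 * INR k * (eps * C)) by nra.
  rewrite HepsC' in *. nra.
Qed.

End CosSeries.

(** * Iterated logarithms *)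

Lemma ln_le_compat x y : 0 < x -> x <= y -> ln x <= ln y.
Proof. intros Hx Hxy. destruct (Req_dec x y) as [->|]; [lra | left; apply ln_increasing; lra]. Qed.

Lemma ln_le_sub_1 u : 0 < u -> ln u <= u - 1.
Proof. intros Hu. assert (H := exp_ineq1_le (ln u)). rewrite exp_ln in H by exact Hu. lra. Qed.

Lemma ln_sub_ge u v : 0 < u -> u <= v -> (v - u) / v <= ln v - ln u.
Proof.
  intros Hu Huv. assert (Hl := ln_le_sub_1 (u / v) ltac:(apply Rdiv_lt_0_compat; lra)).
  unfold Rdiv in Hl. rewrite ln_mult, ln_Rinv in Hl by (try apply Rinv_0_lt_compat; lra).
  replace ((v - u) / v) with (1 - u * / v) by (field; lra). lra.
Qed.

Lemma Rpower_pos x y : 0 < Rpower x y.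
Proof. apply exp_pos. Qed.

Lemma Rpower_ge_1 u a : 1 <= u -> 0 <= a -> 1 <= Rpower u a.
Proof.
  intros Hu Ha. unfold Rpower. assert (Hl : 0 <= ln u) by (rewrite <- ln_1; apply ln_le_compat; lra).
  assert (H := exp_ineq1_le (a * ln u)). nra.
Qed.

(* The convexity of [u ^ (1 - a)], in the form that telescopes [Log_n ^ (1 - a)]. *)
Lemma Rpower_one_sub_diff a u v : 1 < a -> 0 < u -> u <= v ->
  (a - 1) * (v - u) / Rpower v a <= Rpower u (1 - a) - Rpower v (1 - a).
Proof.
  intros Ha Hu Huv. set (s := u / v). assert (Hs : 0 < s) by (unfold s; apply Rdiv_lt_0_compat; lra).
  assert (Hu' : u = v * s) by (unfold s; field; lra).
  assert (E1 : Rpower u (1 - a) = Rpower v (1 - a) * Rpower s (1 - a))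
    by (rewrite Hu', Rpower_mult_distr; lra).
  assert (E2 : Rpower v (1 - a) = v / Rpower v a).
  { unfold Rminus. rewrite Rpower_plus, Rpower_1, Rpower_Ropp by lra. reflexivity. }
  assert (Hb : 1 + (1 - a) * (s - 1) <= Rpower s (1 - a)).
  { unfold Rpower. assert (H := exp_ineq1_le ((1 - a) * ln s)). assert (H2 := ln_le_sub_1 s Hs). nra. }
  rewrite E1, E2. assert (Hva := Rpower_pos v a).
  replace ((a - 1) * (v - u) / Rpower v a) with (v / Rpower v a * ((1 - a) * (s - 1)))
    by (rewrite Hu'; field; lra).
  assert (0 < v / Rpower v a) by (apply Rdiv_lt_0_compat; lra).
  replace (v / Rpower v a * Rpower s (1 - a) - v / Rpower v a)
    with (v / Rpower v a * (Rpower s (1 - a) - 1)) by ring.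
  apply Rmult_le_compat_l; lra.
Qed.

Lemma Ek_ge_1 i : 1 <= Ek i.
Proof. induction i as [|i IH]; simpl; [lra|]. assert (H := exp_ineq1_le (Ek i)). lra. Qed.

Lemma Ek_lt_S i : Ek i < Ek (S i).
Proof. simpl. assert (H := exp_ineq1_le (Ek i)). assert (H1 := Ek_ge_1 i). lra. Qed.

Lemma Ek_le_compat i j : (i <= j)%nat -> Ek i <= Ek j.
Proof. induction 1 as [|j _ IH]; [lra|]. assert (H := Ek_lt_S j). lra. Qed.

Lemma Logk_gt_Ek i m x : Ek (i + m) < x -> Ek m < Logk i x.
Proof.
  revert m. induction i as [|i IH]; intros m H; simpl in *; [exact H|].
  specialize (IH (S m) ltac:(rewrite Nat.add_succ_r; exact H)). simpl in IH.
  rewrite <- (ln_exp (Ek m)). apply ln_increasing; [apply exp_pos | exact IH].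
Qed.

Lemma Logk_ge_Ek i m x : Ek (i + m) <= x -> Ek m <= Logk i x.
Proof.
  revert m. induction i as [|i IH]; intros m H; simpl in *; [exact H|].
  specialize (IH (S m) ltac:(rewrite Nat.add_succ_r; exact H)). simpl in IH.
  rewrite <- (ln_exp (Ek m)). apply ln_le_compat; [apply exp_pos | exact IH].
Qed.

Lemma Logk_gt_1 m i x : (i <= m)%nat -> Ek m < x -> 1 < Logk i x.
Proof.
  intros Hi Hx. assert (H := Logk_gt_Ek i (m - i) x).
  replace (i + (m - i))%nat with m in H by lia. assert (H1 := Ek_ge_1 (m - i)). specialize (H Hx). lra.
Qed.

Lemma Logk_ge_1 m i x : (i <= m)%nat -> Ek m <= x -> 1 <= Logk i x.
Proof.
  intros Hi Hx. assert (H := Logk_ge_Ek i (m - i) x).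
  replace (i + (m - i))%nat with m in H by lia. assert (H1 := Ek_ge_1 (m - i)). specialize (H Hx). lra.
Qed.

Lemma Logk_S_pos m x : Ek m < x -> 0 < Logk (S m) x.
Proof.
  intros Hx. simpl. rewrite <- ln_1. apply ln_increasing; [lra | exact (Logk_gt_1 m m x (le_n m) Hx)].
Qed.

Lemma Logk_S_le_compat i x y : Ek i < x -> x <= y -> Logk (S i) x <= Logk (S i) y.
Proof.
  induction i as [|i IH]; intros Hx Hxy.
  - simpl in *. apply ln_le_compat; lra.
  - assert (H := Ek_lt_S i).
    change (ln (Logk (S i) x) <= ln (Logk (S i) y)).
    apply ln_le_compat; [apply Logk_S_pos; lra | apply IH; lra].
Qed.

Lemma prodLog_ge_1 m p x : (p <= m)%nat -> Ek m < x -> 1 <= prodLog p x.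
Proof.
  induction p as [|p IH]; intros Hp Hx; cbn [prodLog]; [lra|].
  assert (H1 := IH ltac:(lia) Hx). assert (H2 := Logk_gt_1 m (S p) x Hp Hx). nra.
Qed.

Lemma prodLog_le_compat m p x y : (p <= m)%nat -> Ek m < x -> x <= y -> prodLog p x <= prodLog p y.
Proof.
  induction p as [|p IH]; intros Hp Hx Hxy; cbn [prodLog]; [lra|].
  assert (Hpx : Ek p < x) by (assert (H := Ek_le_compat p m ltac:(lia)); lra).
  assert (H1 := prodLog_ge_1 m p x ltac:(lia) Hx). assert (H2 := Logk_gt_1 m (S p) x Hp Hx).
  apply Rmult_le_compat; [lra | lra | apply IH; lia || assumption | apply Logk_S_le_compat; assumption].
Qed.

Lemma Logk_S_double m x y : Ek (S m) <= x -> x <= y -> y <= 2 * x ->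
  forall i, (i <= m)%nat -> Logk (S i) y <= 2 * Logk (S i) x.
Proof.
  intros Hx Hxy Hy2. assert (HE := Ek_ge_1 (S m)).
  assert (Hl2 : ln 2 < 1).
  { rewrite <- (ln_exp 1). apply ln_increasing; [lra|]. assert (H := exp_ineq1 1 ltac:(lra)). lra. }
  induction i as [|i IH]; intros Hi.
  - simpl. assert (H1 := Logk_ge_1 (S m) 1 x ltac:(lia) Hx). simpl in H1.
    assert (ln y <= ln (2 * x)) by (apply ln_le_compat; lra). rewrite ln_mult in H by lra. lra.
  - change (ln (Logk (S i) y) <= 2 * ln (Logk (S i) x)).
    assert (H1 := IH ltac:(lia)).
    assert (H2 := Logk_ge_1 (S m) (S i) x ltac:(lia) Hx).
    assert (H3 := Logk_ge_1 (S m) (S (S i)) x ltac:(lia) Hx). change (1 <= ln (Logk (S i) x)) in H3.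
    assert (H4 := Logk_ge_1 (S m) (S i) y ltac:(lia) ltac:(lra)).
    assert (ln (Logk (S i) y) <= ln (2 * Logk (S i) x)) by (apply ln_le_compat; lra).
    rewrite ln_mult in H by lra. lra.
Qed.

Lemma prodLog_double m x y : Ek (S m) <= x -> x <= y -> y <= 2 * x ->
  forall p, (p <= m)%nat -> prodLog p y <= 2 ^ p * prodLog p x.
Proof.
  intros Hx Hxy Hy2. assert (Hx' : Ek m < x) by (assert (H := Ek_lt_S m); lra).
  induction p as [|p IH]; intros Hp; cbn [prodLog pow]; [lra|].
  assert (H1 := IH ltac:(lia)). assert (H2 := Logk_S_double m x y Hx Hxy Hy2 p ltac:(lia)).
  assert (H3 := prodLog_ge_1 m p y ltac:(lia) ltac:(lra)). assert (H4 := Logk_gt_1 m (S p) y Hp ltac:(lra)).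
  replace (2 * 2 ^ p * (prodLog p x * Logk (S p) x)) with ((2 ^ p * prodLog p x) * (2 * Logk (S p) x)) by ring.
  apply Rmult_le_compat; lra.
Qed.

Lemma Logk_S_le_ln m x : Ek m < x -> forall i, (i <= m)%nat -> Logk (S i) x <= ln x.
Proof.
  intros Hx. induction i as [|i IH]; intros Hi; simpl; [lra|].
  assert (H1 := IH ltac:(lia)). assert (H2 := Logk_gt_1 m (S i) x Hi Hx).
  assert (H3 := ln_le_sub_1 (Logk (S i) x) ltac:(lra)). simpl in *. lra.
Qed.

Lemma prodLog_le_ln_pow m x : Ek m < x -> forall p, (p <= m)%nat -> prodLog p x <= ln x ^ p.
Proof.
  intros Hx. induction p as [|p IH]; intros Hp; cbn [prodLog pow]; [lra|].
  assert (H1 := IH ltac:(lia)). assert (H2 := Logk_S_le_ln m x Hx p ltac:(lia)).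
  assert (H3 := prodLog_ge_1 m p x ltac:(lia) Hx). assert (H4 := Logk_gt_1 m (S p) x Hp Hx).
  rewrite Rmult_comm. apply Rmult_le_compat; lra.
Qed.

Lemma Logk_S_sub_ge p x y : Ek p < x -> x <= y ->
  (y - x) / (y * prodLog p y) <= Logk (S p) y - Logk (S p) x.
Proof.
  revert x y. induction p as [|p IH]; intros x y Hx Hxy.
  - simpl in *. replace (y * 1) with y by ring. apply ln_sub_ge; lra.
  - assert (H1 := Ek_lt_S p). specialize (IH x y ltac:(lra) Hxy).
    assert (Hp1 := Logk_S_pos p x ltac:(lra)).
    assert (Hm := Logk_S_le_compat p x y ltac:(lra) Hxy).
    assert (Hd := ln_sub_ge (Logk (S p) x) (Logk (S p) y) Hp1 Hm).
    assert (Hpy : 1 <= prodLog p y) by (apply (prodLog_ge_1 p p y (le_n _)); lra).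
    assert (Hy : 0 < y) by (assert (H := Ek_ge_1 (S p)); lra).
    change (prodLog (S p) y) with (prodLog p y * Logk (S p) y).
    eapply Rle_trans; [|exact Hd].
    replace ((y - x) / (y * (prodLog p y * Logk (S p) y)))
      with ((y - x) / (y * prodLog p y) / Logk (S p) y) by (field; repeat split; lra).
    unfold Rdiv. apply Rmult_le_compat_r; [left; apply Rinv_0_lt_compat; lra | exact IH].
Qed.

(** * The series F_n *)

Definition log_weight (m : nat) (a x : R) := x * prodLog m x * Rpower (Logk (S m) x) a.

Lemma weight_S m a x : weight (S m) a x = log_weight m a x.
Proof. unfold weight, log_weight. rewrite Nat.sub_succ, Nat.sub_0_r. reflexivity. Qed.

Lemma phase_S m a x : phase (S m) a x = x * log_weight m a x.
Proof. unfold phase, log_weight. rewrite Nat.sub_succ, Nat.sub_0_r. ring. Qed.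

Section LogWeight.

Variables (m : nat) (a : R).
Hypothesis a_pos : 0 < a.

Lemma log_weight_pos x : Ek m < x -> 0 < log_weight m a x.
Proof.
  intros Hx. unfold log_weight. assert (H1 := Ek_ge_1 m).
  assert (H2 := prodLog_ge_1 m m x (le_n _) Hx). assert (H3 := Rpower_pos (Logk (S m) x) a).
  apply Rmult_lt_0_compat; [nra | exact H3].
Qed.

Lemma log_weight_le_compat x y : Ek m < x -> x <= y -> log_weight m a x <= log_weight m a y.
Proof.
  intros Hx Hxy. unfold log_weight. assert (H1 := Ek_ge_1 m).
  assert (H2 := prodLog_ge_1 m m x (le_n _) Hx).
  assert (H3 := prodLog_le_compat m m x y (le_n _) Hx Hxy).
  assert (H4 := Logk_S_le_compat m x y Hx Hxy). assert (H5 := Logk_S_pos m x Hx).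
  assert (H6 : Rpower (Logk (S m) x) a <= Rpower (Logk (S m) y) a) by (apply Rle_Rpower_l; lra).
  assert (H7 := Rpower_pos (Logk (S m) x) a).
  apply Rmult_le_compat; [nra | lra | apply Rmult_le_compat; lra | exact H6].
Qed.

Lemma log_weight_ge_id x : Ek (S m) <= x -> x <= log_weight m a x.
Proof.
  intros Hx. assert (Hx' : Ek m < x) by (assert (H := Ek_lt_S m); lra).
  unfold log_weight. assert (H1 := prodLog_ge_1 m m x (le_n _) Hx').
  assert (H2 := Logk_ge_1 (S m) (S m) x (le_n _) Hx). assert (H3 := Rpower_ge_1 _ a H2 ltac:(lra)).
  assert (H4 := Ek_ge_1 (S m)).
  assert (x * 1 <= x * prodLog m x) by (apply Rmult_le_compat_l; lra).
  assert (x * prodLog m x * 1 <= x * prodLog m x * Rpower (Logk (S m) x) a)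
    by (apply Rmult_le_compat_l; lra).
  lra.
Qed.

Definition doubling_const := 2 * 2 ^ m * Rpower 2 a.

Lemma doubling_const_ge_1 : 1 <= doubling_const.
Proof.
  unfold doubling_const. assert (1 <= 2 ^ m) by (apply pow_R1_Rle; lra).
  assert (1 <= Rpower 2 a) by (apply Rpower_ge_1; lra). nra.
Qed.

Lemma log_weight_double x y : Ek (S m) <= x -> x <= y -> y <= 2 * x ->
  log_weight m a y <= doubling_const * log_weight m a x.
Proof.
  intros Hx Hxy Hy2. assert (Hx' : Ek m < x) by (assert (H := Ek_lt_S m); lra).
  assert (HE := Ek_ge_1 m). unfold log_weight, doubling_const.
  assert (H1 := prodLog_double m x y Hx Hxy Hy2 m (le_n _)).
  assert (H2 := Logk_S_double m x y Hx Hxy Hy2 m (le_n _)).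
  assert (H3 := Logk_S_pos m y ltac:(lra)).
  assert (H4 : Rpower (Logk (S m) y) a <= Rpower 2 a * Rpower (Logk (S m) x) a).
  { rewrite Rpower_mult_distr by (try apply Logk_S_pos; lra). apply Rle_Rpower_l; lra. }
  assert (H5 := prodLog_ge_1 m m y (le_n _) ltac:(lra)).
  assert (H6 := Rpower_pos (Logk (S m) y) a).
  replace (2 * 2 ^ m * Rpower 2 a * (x * prodLog m x * Rpower (Logk (S m) x) a))
    with ((2 * x) * (2 ^ m * prodLog m x) * (Rpower 2 a * Rpower (Logk (S m) x) a)) by ring.
  apply Rmult_le_compat; [nra | lra | apply Rmult_le_compat; lra | exact H4].
Qed.

Definition sqr_const := Rpower (INR m + a) (INR m + a).

(* Each iterated logarithm is at most [ln x], and [ln x ^ (m + a)] is at most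
   [(m + a) ^ (m + a) x]. *)
Lemma log_weight_le_sqr x : Ek m < x -> log_weight m a x <= sqr_const * x ^ 2.
Proof.
  intros Hx. assert (HE := Ek_ge_1 m). assert (HN := pos_INR m).
  set (e := INR m + a). assert (He : 0 < e) by (unfold e; lra).
  assert (Hlnx : 0 < ln x).
  { rewrite <- ln_1. apply ln_increasing; [lra|].
    destruct m as [|m']; [simpl in Hx; lra|].
    assert (H := Logk_gt_1 (S m') 1 x ltac:(lia) Hx). simpl in H. lra. }
  assert (H1 := prodLog_le_ln_pow m x Hx m (le_n _)).
  assert (H2 := Logk_S_le_ln m x Hx m (le_n _)).
  assert (H3 := Logk_S_pos m x Hx).
  assert (H4 : Rpower (Logk (S m) x) a <= Rpower (ln x) a) by (apply Rle_Rpower_l; lra).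
  assert (H5 : prodLog m x * Rpower (Logk (S m) x) a <= Rpower (ln x) e).
  { unfold e. rewrite Rpower_plus, Rpower_pow by lra.
    assert (H6 := prodLog_ge_1 m m x (le_n _) Hx). assert (H7 := Rpower_pos (Logk (S m) x) a).
    apply Rmult_le_compat; lra. }
  assert (H6 : ln x <= e * Rpower x (/ e)).
  { assert (E : ln (Rpower x (/ e)) = / e * ln x) by apply ln_Rpower.
    assert (H7 := ln_le_sub_1 (Rpower x (/ e)) (Rpower_pos _ _)).
    replace (ln x) with (e * (/ e * ln x)) by (field; lra). rewrite <- E.
    apply Rmult_le_compat_l; lra. }
  assert (H7 : Rpower (ln x) e <= sqr_const * x).
  { eapply Rle_trans; [apply Rle_Rpower_l; [lra | split; [exact Hlnx | exact H6]]|].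
    rewrite <- Rpower_mult_distr by (try apply Rpower_pos; lra). rewrite Rpower_mult.
    replace (/ e * e) with 1 by (field; lra). rewrite Rpower_1 by lra. unfold sqr_const. fold e. lra. }
  unfold log_weight.
  replace (x * prodLog m x * Rpower (Logk (S m) x) a) with (x * (prodLog m x * Rpower (Logk (S m) x) a)) by ring.
  replace (sqr_const * x ^ 2) with (x * (sqr_const * x)) by ring.
  apply Rmult_le_compat_l; lra.
Qed.

Lemma log_weight_telescope x : 1 < a -> Ek m < x ->
  (a - 1) / log_weight m a (x + 1) <= Rpower (Logk (S m) x) (1 - a) - Rpower (Logk (S m) (x + 1)) (1 - a).
Proof.
  intros Ha Hx.
  assert (Hd := Logk_S_sub_ge m x (x + 1) Hx ltac:(lra)). replace (x + 1 - x) with 1 in Hd by ring.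
  assert (Hu := Logk_S_pos m x Hx). assert (Hm := Logk_S_le_compat m x (x + 1) Hx ltac:(lra)).
  eapply Rle_trans; [|exact (Rpower_one_sub_diff a _ _ Ha Hu Hm)].
  set (v := Logk (S m) (x + 1)) in *.
  assert (Hva := Rpower_pos v a). assert (HE := Ek_ge_1 m).
  assert (Hp := prodLog_ge_1 m m (x + 1) (le_n _) ltac:(lra)).
  unfold log_weight. fold v.
  replace ((a - 1) / ((x + 1) * prodLog m (x + 1) * Rpower v a))
    with ((a - 1) * (1 / ((x + 1) * prodLog m (x + 1))) / Rpower v a) by (field; repeat split; lra).
  unfold Rdiv at 1 3. apply Rmult_le_compat_r; [left; apply Rinv_0_lt_compat; lra|].
  apply Rmult_le_compat_l; lra.
Qed.

End LogWeight.

Definition log_coef (m : nat) (a : R) (j : nat) :=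
  if Rlt_dec (Ek m) (INR j) then / log_weight m a (INR j) else 0.

Definition log_freq (m : nat) (a : R) (j : nat) := INR j * log_weight m a (INR j).

Section LogCoef.

Variables (m : nat) (a : R).
Hypothesis a_gt_1 : 1 < a.

Let a_pos : 0 < a.
Proof. lra. Qed.

Lemma log_coef_eq j : Ek m < INR j -> log_coef m a j = / log_weight m a (INR j).
Proof. intros H. unfold log_coef. destruct Rlt_dec; [reflexivity | lra]. Qed.

Lemma log_coef_nonneg j : 0 <= log_coef m a j.
Proof.
  unfold log_coef. destruct Rlt_dec; [|lra].
  left. apply Rinv_0_lt_compat, log_weight_pos; assumption.
Qed.

Lemma log_coef_support j : 0 < log_coef m a j -> Ek m < INR j.
Proof. unfold log_coef. destruct Rlt_dec; [tauto | lra]. Qed.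

Lemma log_coef_le_doubling j k : Ek (S m) <= INR j -> Ek m < INR k -> INR k <= 2 * INR j ->
  log_coef m a j <= doubling_const m a * log_coef m a k.
Proof.
  intros Hj Hk Hkj. assert (HE := Ek_lt_S m).
  assert (HD := doubling_const_ge_1 m a a_pos).
  rewrite !log_coef_eq by lra.
  assert (Hwj := log_weight_pos m a (INR j) ltac:(lra)).
  assert (Hwk := log_weight_pos m a (INR k) Hk).
  destruct (Rle_lt_dec (INR k) (INR j)) as [Hkj'|Hkj'].
  - assert (log_weight m a (INR k) <= log_weight m a (INR j)) by (apply log_weight_le_compat; lra).
    assert (/ log_weight m a (INR j) <= / log_weight m a (INR k)) by (apply Rinv_le_contravar; lra).
    assert (0 < / log_weight m a (INR k)) by (apply Rinv_0_lt_compat; lra). nra.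
  - assert (log_weight m a (INR k) <= doubling_const m a * log_weight m a (INR j))
      by (apply log_weight_double; lra).
    apply (Rmult_le_reg_l (log_weight m a (INR j) * log_weight m a (INR k))); [nra|].
    replace (log_weight m a (INR j) * log_weight m a (INR k) * / log_weight m a (INR j))
      with (log_weight m a (INR k)) by (field; lra).
    replace (log_weight m a (INR j) * log_weight m a (INR k) * (doubling_const m a * / log_weight m a (INR k)))
      with (doubling_const m a * log_weight m a (INR j)) by (field; lra).
    lra.
Qed.

(* [sum_{j <= N} c_j + Log_{m+1}(N)^(1-a) / (a - 1)] decreases once [N > E_m]. *)
Lemma log_coef_summable : exists l, Un_cv (sum_f_R0 (log_coef m a)) l.
Proof.
  assert (HE := Ek_ge_1 m).
  set (f := fun x => Rpower (Logk (S m) x) (1 - a) / (a - 1)).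
  assert (Hf : forall x, 0 <= f x)
    by (intros x; apply Rdiv_nonneg; [left; apply Rpower_pos | lra]).
  destruct (exists_nat_between (Ek m + 1)) as [j0 [Hj0 _]]; [lra|].
  assert (Hg : Un_growing (sum_f_R0 (log_coef m a)))
    by (intros n; rewrite tech5; assert (H := log_coef_nonneg (S n)); lra).
  assert (Hstep : forall d, sum_f_R0 (log_coef m a) (j0 + d) + f (INR (j0 + d))
                            <= sum_f_R0 (log_coef m a) j0 + f (INR j0)).
  { induction d as [|d IH]; [rewrite Nat.add_0_r; lra|].
    rewrite Nat.add_succ_r, tech5, S_INR.
    assert (Hx : Ek m < INR (j0 + d)) by (assert (INR j0 <= INR (j0 + d)) by (apply le_INR; lia); lra).
    rewrite log_coef_eq by (rewrite S_INR; lra). rewrite S_INR.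
    assert (Ht := log_weight_telescope m a (INR (j0 + d)) a_gt_1 Hx).
    assert (Hw := log_weight_pos m a (INR (j0 + d) + 1) ltac:(lra)).
    assert (/ log_weight m a (INR (j0 + d) + 1) <= f (INR (j0 + d)) - f (INR (j0 + d) + 1)).
    { apply (Rmult_le_reg_l (a - 1)); [lra|]. unfold f.
      replace ((a - 1) * (Rpower (Logk (S m) (INR (j0 + d))) (1 - a) / (a - 1)
                          - Rpower (Logk (S m) (INR (j0 + d) + 1)) (1 - a) / (a - 1)))
        with (Rpower (Logk (S m) (INR (j0 + d))) (1 - a) - Rpower (Logk (S m) (INR (j0 + d) + 1)) (1 - a))
        by (field; lra).
      exact Ht. }
    lra. }
  destruct (growing_cv _ Hg) as [l Hl].
  - exists (sum_f_R0 (log_coef m a) j0 + f (INR j0)). intros x [N ->].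
    destruct (le_lt_dec N j0) as [HN|HN].
    + assert (H := growing_prop _ j0 N Hg HN). assert (H0 := Hf (INR j0)). lra.
    + specialize (Hstep (N - j0)%nat). replace (j0 + (N - j0))%nat with N in Hstep by lia.
      assert (H0 := Hf (INR N)). lra.
  - exists l. exact Hl.
Qed.

Lemma log_coef_div_dist_sqr_le j k : 2 * Ek (S m) + 2 <= INR k -> j <> k ->
  log_coef m a j / (INR j - INR k) ^ 2
  <= doubling_const m a * log_coef m a k / (INR j - INR k) ^ 2 + 4 * log_coef m a j / INR k ^ 2.
Proof.
  intros Hk Hjk. assert (HE := Ek_ge_1 (S m)). assert (HE2 := Ek_lt_S m).
  assert (Hcj := log_coef_nonneg j). assert (Hck := log_coef_nonneg k).
  assert (HD := doubling_const_ge_1 m a a_pos).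
  assert (Hsq : 0 < (INR j - INR k) ^ 2)
    by (assert (INR j - INR k <> 0) by (intro E; apply Hjk, INR_eq; lra); nra).
  assert (Hk2 : 0 < INR k ^ 2) by nra.
  assert (0 <= 4 * log_coef m a j / INR k ^ 2) by (apply Rdiv_nonneg; lra).
  assert (0 <= doubling_const m a * log_coef m a k / (INR j - INR k) ^ 2)
    by (apply Rdiv_nonneg; nra).
  destruct (Rle_lt_dec (INR k) (2 * INR j)) as [Hkj|Hkj].
  - assert (Hcjk := log_coef_le_doubling j k ltac:(lra) ltac:(lra) Hkj).
    assert (log_coef m a j / (INR j - INR k) ^ 2 <= doubling_const m a * log_coef m a k / (INR j - INR k) ^ 2)
      by (apply Rmult_le_compat_r; [left; apply Rinv_0_lt_compat|]; lra).
    lra.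
  - assert (Hb : INR k ^ 2 / 4 <= (INR j - INR k) ^ 2) by (assert (Hj0 := pos_INR j); nra).
    assert (log_coef m a j / (INR j - INR k) ^ 2 <= 4 * log_coef m a j / INR k ^ 2).
    { replace (4 * log_coef m a j / INR k ^ 2) with (log_coef m a j * (4 * / INR k ^ 2))
        by (unfold Rdiv; ring).
      apply Rmult_le_compat_l; [exact Hcj|].
      replace (4 * / INR k ^ 2) with (/ (INR k ^ 2 / 4)) by (field; lra).
      apply Rinv_le_contravar; lra. }
    lra.
Qed.

Lemma inv_sqr_le_log_coef k : Ek m < INR k -> / INR k ^ 2 <= sqr_const m a * log_coef m a k.
Proof.
  intros Hk. rewrite log_coef_eq by exact Hk.
  assert (Hw := log_weight_pos m a (INR k) Hk). assert (HE := Ek_ge_1 m).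
  assert (Hq := log_weight_le_sqr m a a_pos (INR k) Hk).
  assert (Hk2 : 0 < INR k ^ 2) by (apply pow_lt; lra).
  apply (Rmult_le_reg_l (INR k ^ 2 * log_weight m a (INR k))); [nra|].
  replace (INR k ^ 2 * log_weight m a (INR k) * / INR k ^ 2) with (log_weight m a (INR k)) by (field; lra).
  replace (INR k ^ 2 * log_weight m a (INR k) * (sqr_const m a * / log_weight m a (INR k)))
    with (sqr_const m a * INR k ^ 2) by (field; lra).
  lra.
Qed.

Lemma log_coef_neighbour_sum lc k N :
  Un_cv (sum_f_R0 (log_coef m a)) lc -> 2 * Ek (S m) + 2 <= INR k ->
  neighbour_sum (log_coef m a) k N
  <= (4 * doubling_const m a + 4 * lc * sqr_const m a) * log_coef m a k.
Proof.
  intros Hlc Hk. assert (HE := Ek_ge_1 (S m)). assert (HE2 := Ek_lt_S m).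
  set (c := log_coef m a). set (D := doubling_const m a).
  assert (Hk1 : (1 <= k)%nat) by (destruct k; [change (INR 0) with 0 in Hk; lra | lia]).
  assert (Hk2 : 0 < INR k ^ 2) by (apply pow_lt; lra).
  assert (HD := doubling_const_ge_1 m a a_pos). fold D in HD.
  assert (Hck := log_coef_nonneg k). fold c in Hck.
  set (g := fun j => if Nat.eq_dec j k then 0 else / (INR j - INR k) ^ 2).
  assert (Hterm : forall j, (if Nat.eq_dec j k then 0 else c j / (INR j - INR k) ^ 2)
                            <= D * c k * g j + 4 / INR k ^ 2 * c j).
  { intros j. unfold g. destruct (Nat.eq_dec j k) as [->|Hjk].
    - assert (Hcj := log_coef_nonneg k). fold c in Hcj.
      assert (0 <= 4 / INR k ^ 2 * c k) by (apply Rmult_le_pos; [apply Rdiv_nonneg|]; lra).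
      lra.
    - assert (H := log_coef_div_dist_sqr_le j k Hk Hjk). fold c D in H.
      unfold Rdiv in *. lra. }
  assert (Hg4 := inv_sqr_dist_sum k N Hk1). fold g in Hg4.
  assert (Hc := sum_incr (log_coef m a) N lc Hlc log_coef_nonneg). fold c in Hc.
  assert (Hc0 : 0 <= sum_f_R0 c N) by (apply cond_pos_sum; intros; apply log_coef_nonneg).
  assert (Hinv := inv_sqr_le_log_coef k ltac:(lra)). fold c in Hinv.
  unfold neighbour_sum. fold c.
  eapply Rle_trans; [apply sum_Rle; intros; apply Hterm|].
  rewrite plus_sum.
  replace (sum_f_R0 (fun j => D * c k * g j) N) with (D * c k * sum_f_R0 g N)
    by (rewrite scal_sum; apply sum_eq; intros; ring).
  replace (sum_f_R0 (fun j => 4 / INR k ^ 2 * c j) N) with (4 / INR k ^ 2 * sum_f_R0 c N)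
    by (rewrite scal_sum; apply sum_eq; intros; ring).
  assert (D * c k * sum_f_R0 g N <= D * c k * 4) by (apply Rmult_le_compat_l; nra).
  assert (/ INR k ^ 2 * sum_f_R0 c N <= sqr_const m a * c k * lc)
    by (apply Rmult_le_compat; [left; apply Rinv_0_lt_compat; lra | lra | lra | lra]).
  unfold Rdiv. nra.
Qed.

End LogCoef.

Lemma log_coef_peak m a lc : 1 < a -> Un_cv (sum_f_R0 (log_coef m a)) lc ->
  forall B, exists k, peak_index (log_coef m a) (log_freq m a)
                        (4 * doubling_const m a + 4 * lc * sqr_const m a) B k.
Proof.
  intros Ha Hlc B. assert (HE := Ek_ge_1 (S m)). assert (HE2 := Ek_lt_S m).
  destruct (exists_nat_between (Rmax (2 * Ek (S m) + 2) B)) as [k [Hk _]];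
    [eapply Rle_trans; [|apply Rmax_l]; lra|].
  assert (Hk1 : 2 * Ek (S m) + 2 <= INR k) by (eapply Rle_trans; [apply Rmax_l | exact Hk]).
  assert (HkB : B <= INR k) by (eapply Rle_trans; [apply Rmax_r | exact Hk]).
  exists k.
  set (w := log_weight m a).
  assert (Hwk : 0 < w (INR k)) by (apply log_weight_pos; lra).
  assert (Hck : log_coef m a k = / w (INR k)) by (apply log_coef_eq; lra).
  assert (Hge : INR k <= w (INR k)) by (apply log_weight_ge_id; lra).
  split.
  - destruct k; [change (INR 0) with 0 in Hk1; lra | lia].
  - rewrite Hck. apply Rinv_0_lt_compat, Hwk.
  - rewrite Hck. unfold log_freq. fold w. field. lra.
  - unfold log_freq. fold w. nra.
  - intros j Hcj Hjk. assert (Hj := log_coef_support m a j Hcj).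
    unfold log_freq. fold w.
    assert (Hwj : 0 < w (INR j)) by (apply log_weight_pos; lra).
    assert (Key : (INR j - INR k) ^ 2 * w (INR k) ^ 2 <= (INR j * w (INR j) - INR k * w (INR k)) ^ 2).
    { destruct (Rlt_or_le (INR j) (INR k)).
      - assert (w (INR j) <= w (INR k)) by (apply log_weight_le_compat; lra).
        assert (0 <= (INR k - INR j) * w (INR k) <= INR k * w (INR k) - INR j * w (INR j))
          by (assert (Hj0 := pos_INR j); split; nra).
        replace ((INR j - INR k) ^ 2 * w (INR k) ^ 2) with (((INR k - INR j) * w (INR k)) ^ 2) by ring.
        replace ((INR j * w (INR j) - INR k * w (INR k)) ^ 2)
          with ((INR k * w (INR k) - INR j * w (INR j)) ^ 2) by ring.
        apply pow_incr; lra.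
      - assert (w (INR k) <= w (INR j)) by (apply log_weight_le_compat; lra).
        assert (0 <= (INR j - INR k) * w (INR k) <= INR j * w (INR j) - INR k * w (INR k))
          by (split; nra).
        replace ((INR j - INR k) ^ 2 * w (INR k) ^ 2) with (((INR j - INR k) * w (INR k)) ^ 2) by ring.
        apply pow_incr; lra. }
    replace ((INR j - INR k) ^ 2 * (INR k * w (INR k)) ^ 2)
      with ((INR j - INR k) ^ 2 * w (INR k) ^ 2 * INR k ^ 2) by ring.
    apply Rmult_le_compat_r; [nra | exact Key].
  - intros N. apply log_coef_neighbour_sum; assumption.
Qed.

Section LogCosSeries.

Variables (m : nat) (a b : R).
Hypothesis a_gt_1 : 1 < a.

Lemma log_cos_series_cv t :
  exists l, Un_cv (sum_f_R0 (cos_term (log_coef m a) (log_freq m a) b t)) l.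
Proof. apply cos_series_cv; [apply log_coef_nonneg | apply log_coef_summable, a_gt_1]. Qed.

Lemma log_cos_series_regularity F :
  (forall t, Un_cv (sum_f_R0 (cos_term (log_coef m a) (log_freq m a) b t)) (F t)) ->
  continuity F /\ forall t l, ~ derivable_pt_lim F t l.
Proof.
  intros HF.
  assert (Hc : forall j, 0 <= log_coef m a j) by apply log_coef_nonneg.
  assert (Hlam : forall j, 0 < log_coef m a j -> 0 <= log_freq m a j).
  { intros j Hj. assert (Hw := log_weight_pos m a (INR j) (log_coef_support m a j Hj)).
    unfold log_freq. assert (Hj0 := pos_INR j). nra. }
  destruct (log_coef_summable m a a_gt_1) as [lc Hlc].
  assert (HK : 0 < 4 * doubling_const m a + 4 * lc * sqr_const m a).
  { assert (H1 := doubling_const_ge_1 m a ltac:(lra)).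
    assert (H2 := Rpower_pos (INR m + a) (INR m + a)). fold (sqr_const m a) in H2.
    assert (H3 := sum_incr _ O lc Hlc Hc). assert (H4 := Hc O). simpl in H3. nra. }
  assert (Hsum : exists l, Un_cv (sum_f_R0 (log_coef m a)) l) by (exists lc; exact Hlc).
  split.
  - exact (cos_series_continuity _ _ b Hc Hsum F HF).
  - exact (cos_series_nowhere_differentiable _ _ b Hc Hsum Hlam F HF _ HK (log_coef_peak m a lc a_gt_1 Hlc)).
Qed.

End LogCosSeries.

Lemma partRe_eq m a t N :
  sum_f_R0 (cos_term (log_coef m a) (log_freq m a) 0 t) N = partRe (S m) a t N.
Proof.
  apply sum_eq. intros j _.
  unfold termRe, cos_term, log_coef, log_freq. rewrite Nat.sub_succ, Nat.sub_0_r, weight_S, phase_S.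
  destruct Rlt_dec; [|ring]. rewrite Rminus_0_r, (Rmult_comm t). unfold Rdiv. ring.
Qed.

Lemma partIm_eq m a t N :
  sum_f_R0 (cos_term (log_coef m a) (log_freq m a) (PI / 2) t) N = partIm (S m) a t N.
Proof.
  apply sum_eq. intros j _.
  unfold termIm, cos_term, log_coef, log_freq. rewrite Nat.sub_succ, Nat.sub_0_r, weight_S, phase_S.
  destruct Rlt_dec; [|ring]. rewrite cos_sub_PI2, (Rmult_comm t). unfold Rdiv. ring.
Qed.

Theorem mainTheorem12 (n : nat) (a : R) (hn : (2 <= n)%nat) (ha : 1 < a) :
  (forall t : R, exists l : R, Un_cv (partRe n a t) l) /\
  (forall t : R, exists l : R, Un_cv (partIm n a t) l) /\
  (forall ReF ImF : R -> R,
     (forall t, Un_cv (partRe n a t) (ReF t)) ->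
     (forall t, Un_cv (partIm n a t) (ImF t)) ->
     continuity ReF /\ continuity ImF /\
     forall t : R,
       ~ (exists l, derivable_pt_lim ReF t l) /\
       ~ (exists l, derivable_pt_lim ImF t l) /\
       ~ (exists l1 l2, derivable_pt_lim ReF t l1 /\ derivable_pt_lim ImF t l2)).
Proof.
  destruct n as [|m]; [lia|].
  split; [|split].
  - intros t. destruct (log_cos_series_cv m a 0 ha t) as [l Hl].
    exists l. exact (Un_cv_ext _ _ (partRe_eq m a t) _ Hl).
  - intros t. destruct (log_cos_series_cv m a (PI / 2) ha t) as [l Hl].
    exists l. exact (Un_cv_ext _ _ (partIm_eq m a t) _ Hl).
  - intros ReF ImF HR HI.
    destruct (log_cos_series_regularity m a 0 ha ReF) as [HcRe HndRe].
    { intros t. apply (Un_cv_ext _ _ (fun N => eq_sym (partRe_eq m a t N))), HR. }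
    destruct (log_cos_series_regularity m a (PI / 2) ha ImF) as [HcIm HndIm].
    { intros t. apply (Un_cv_ext _ _ (fun N => eq_sym (partIm_eq m a t N))), HI. }
    split; [exact HcRe|]. split; [exact HcIm|]. intros t. split; [|split].
    + intros [l Hd]. exact (HndRe t l Hd).
    + intros [l Hd]. exact (HndIm t l Hd).
    + intros [l1 [l2 [Hd _]]]. exact (HndRe t l1 Hd).
Qed.
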